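(* Let $d\ge 8$ be an even integer and let $B$ be a bubble gadget properly attached to $S$ in a graph $G$. Let $H$ be a $(d+1)$-diverse induced subgraph of $G$ such that at least one vertex of the top row of $B$, or at least two vertices of the rightmost column of $B$, have no neighbor in $V(H)\setminus V(B)$. Then $H$ contains at most one vertex of $B$.
   Context: Two distinct vertices $u,v$ of a graph $H$ are $d$-twins in $H$ if $|(N_H(u)\setminus N_H[v])\cup(N_H(v)\setminus N_H[u])|\le d$. A graph is $(d+1)$-diverse if it has at least two vertices and no pair of $d$-twins. The $a\times b$ rook graph has vertex set $\{(i,j): i\in[a], j\in[b]\}$, two distinct vertices adjacent iff they agree in some coordinate; view it as a grid with rows and columns. A bubble gadget $B$ (for $d$) is the $w\times w$ rook graph with $w=d/2+2$, minus the two rightmost vertices of its top row (so the top row has $d/2$ vertices and the rightmost column has $d/2+1$ vertices). If $B$ is an induced subgraph of $G$ and $S$ is the set of vertices outside $V(B)$ with a neighbor in $V(B)$, then $B$ is properly attached to $S$ in $G$ if every vertex of the top row and of the rightmost column of $B$ has one or two neighbors in $V(G)\setminus V(B)$, while every other vertex of $B$ has no neighbor outside $V(B)$. *)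

From mathcomp Require Import all_boot.
Set Implicit Arguments. Unset Strict Implicit. Unset Printing Implicit Defensive.

Definition simple_graph (T : finType) (g : rel T) := symmetric g /\ irreflexive g.

Section Graphs.
Variables (T : finType) (g : rel T).

Definition nbh (X : {set T}) (u : T) : {set T} := [set v in X | g u v].
Definition cnbh (X : {set T}) (u : T) : {set T} := u |: nbh X u.

Definition twins (d : nat) (X : {set T}) (u v : T) : bool :=
  [&& u \in X, v \in X, u != v &
      #|(nbh X u :\: cnbh X v) :|: (nbh X v :\: cnbh X u)| <= d].

Definition diverse_plus1 (d : nat) (X : {set T}) : Prop :=
  2 <= #|X| /\ forall u v, ~~ twins d X u v.
End Graphs.

(* Bubble gadget for d: the w x w rook graph, w = d/2 + 2, minus the two
   rightmost vertices of the top row. Coordinates (row, column), row 0 = top,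
   column w-1 = rightmost. *)
Definition bw (d : nat) : nat := d./2 + 2.

Definition bubble_vertex (d : nat) (p : 'I_(bw d) * 'I_(bw d)) : bool :=
  ~~ (((p.1 : nat) == 0) && (bw d - 2 <= p.2)).

Definition top_row (d : nat) (p : 'I_(bw d) * 'I_(bw d)) : bool :=
  bubble_vertex p && ((p.1 : nat) == 0).

Definition right_col (d : nat) (p : 'I_(bw d) * 'I_(bw d)) : bool :=
  bubble_vertex p && ((p.2 : nat) == bw d - 1).

Definition rook_adj (n : nat) (p q : 'I_n * 'I_n) : bool :=
  (p != q) && ((p.1 == q.1) || (p.2 == q.2)).

Section Bubble.
Variables (T : finType) (g : rel T) (d : nat) (f : 'I_(bw d) * 'I_(bw d) -> T).

Definition is_induced_bubble : Prop :=
  (forall p q, bubble_vertex p -> bubble_vertex q -> f p = f q -> p = q) /\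
  (forall p q, bubble_vertex p -> bubble_vertex q -> g (f p) (f q) = rook_adj p q).

Definition VB : {set T} := [set f p | p in [pred p | bubble_vertex p]].

Definition properly_attached (S : {set T}) : Prop :=
  S = [set x | (x \notin VB) && [exists y in VB, g x y]] /\
  forall p, bubble_vertex p ->
    let out := #|[set x | (x \notin VB) && g (f p) x]| in
    if top_row p || right_col p then (1 <= out <= 2) else out == 0.

Definition no_outer_nbr (X : {set T}) (p : 'I_(bw d) * 'I_(bw d)) : bool :=
  [set x in X :\: VB | g (f p) x] == set0.
End Bubble.

From mathcomp Require Import all_boot zify.
Set Implicit Arguments. Unset Strict Implicit. Unset Printing Implicit Defensive.

(* Call a cell of the gadget occupied when its vertex lies in H. Two occupied
   cells u, v are not d-twins, and every vertex of H adjacent to exactly one of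
   them is either an occupied cell sharing a line with exactly one of them or
   one of the at most two outer neighbours of a top-row or right-column cell.
   With d = 2k and lines of at most k + 2 cells this gives, e.g.,
   d + 3 <= |col u| + |col v| + |out u| + |out v| for u, v in a common row.
   Two occupied cells then force a line with three occupied cells, and from
   there a fully occupied row below the top one. Such a row makes every column
   left of the gap full and the penultimate column full below the top row.
   A top-row vertex without outer neighbours now violates the bound for two
   cells of its column; a right-column vertex without outer neighbours is not
   in H (by the bound against the penultimate column), so two of them leave
   two rows incomplete, violating the bound for two cells of the first column. *)

Section CardBounds.
Variable T : finType.
Implicit Types (A : {set T}) (a b : T).

Lemma card_lt_notin A a : a \notin A -> #|A| < #|T|.
Proof.
move=> aA; rewrite -cardsT; apply: proper_card; rewrite properT.
by apply: contraNneq aA => ->; rewrite inE.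
Qed.

Lemma card_notin2 A a b : a != b -> a \notin A -> b \notin A -> #|A|.+2 <= #|T|.
Proof.
move=> ab aA bA; have := max_card (mem (a |: (b |: A))).
by rewrite !cardsU1 !inE negb_or ab aA bA.
Qed.

Lemma mem_card_full A a : #|T| <= #|A| -> a \in A.
Proof. by move=> full; apply: contraTT full => /card_lt_notin; rewrite -ltnNge. Qed.

End CardBounds.

Lemma card_ord_set_le m (A : {set 'I_m}) : #|A| <= m.
Proof. by rewrite -[X in _ <= X](card_ord m) max_card. Qed.

Lemma ord_set_pick2 m (A : {set 'I_m}) a : 2 < #|A| ->
  exists x y : 'I_m, [/\ x \in A, y \in A, x != a, y != a & x != y].
Proof.
move=> big; have : 1 < #|A :\ a|.
  by move: big; rewrite (cardsD1 a); case: (a \in A) => [|/ltnW].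
case/card_gt1P => x [y [+ + xy]]; rewrite !inE => /andP[xa xA] /andP[ya yA].
by exists x, y.
Qed.

Lemma mem_ord_set_full m (A : {set 'I_m}) i : m <= #|A| -> i \in A.
Proof. by rewrite -[X in X <= _](card_ord m) => /mem_card_full. Qed.

Lemma bw_gt0 d : 0 < bw d. Proof. by rewrite /bw addn2. Qed.
Lemma bw_sub1_lt d : bw d - 1 < bw d. Proof. by rewrite /bw; lia. Qed.
Lemma bw_sub2_lt d : bw d - 2 < bw d. Proof. by rewrite /bw; lia. Qed.

Definition first_idx d : 'I_(bw d) := Ordinal (bw_gt0 d).
Definition penult_idx d : 'I_(bw d) := Ordinal (bw_sub2_lt d).
Definition last_idx d : 'I_(bw d) := Ordinal (bw_sub1_lt d).

Section BubbleCells.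
Variable d : nat.
Local Notation n := (bw d).
Local Notation k := d./2.
Local Notation i0 := (first_idx d).
Implicit Types r c : 'I_n.

Lemma bubble_vertexE r c : bubble_vertex (r, c) = (r != i0) || (c < k).
Proof. by rewrite /bubble_vertex /= negb_and -ltnNge /bw addnK. Qed.

Lemma top_rowE r c : top_row (r, c) = (r == i0) && (c < k).
Proof. by rewrite /top_row bubble_vertexE -[_ == 0]/(r == i0) andbC; case: eqP. Qed.

Lemma right_colE r c : right_col (r, c) = (r != i0) && (c == last_idx d).
Proof.
rewrite /right_col bubble_vertexE -[_ == bw d - 1]/(c == last_idx d) andbC [RHS]andbC.
case: eqP => [-> | _] //=.
have /negbTE -> : ~~ (bw d - 1 < k) by rewrite /bw; lia.
by rewrite orbF.
Qed.

Lemma penult_idxE : penult_idx d = k :> nat.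
Proof. by rewrite /= /bw addnK. Qed.

Lemma half_le_last : k <= last_idx d.
Proof. by rewrite /= /bw; lia. Qed.

Lemma lt_half_neq_last c : c < k -> c != last_idx d.
Proof. by move=> ck; apply: contraTneq ck => ->; rewrite /= /bw; lia. Qed.

Lemma penult_neq_last : penult_idx d != last_idx d.
Proof. by apply/eqP => /(congr1 val) /=; rewrite /bw; lia. Qed.

End BubbleCells.

Section Bubble.
Variables (T : finType) (g : rel T) (d : nat).
Variables (f : 'I_(bw d) * 'I_(bw d) -> T) (S H : {set T}).
Hypotheses (g_simple : simple_graph g) (f_induced : is_induced_bubble g f).
Hypotheses (f_attached : properly_attached g f S) (H_diverse : diverse_plus1 g d H).

Local Notation n := (bw d).
Local Notation k := d./2.
Local Notation cell := ('I_n * 'I_n)%type.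
Local Notation i0 := (first_idx d).
Local Notation ipen := (penult_idx d).
Local Notation ilast := (last_idx d).
Implicit Types (p q u v : cell) (r c : 'I_n).

Definition occupied p := bubble_vertex p && (f p \in H).
Definition outer p := [set x in H :\: VB f | g (f p) x].
Definition row_occ r := [set c | occupied (r, c)].
Definition col_occ c := [set r | occupied (r, c)].
Definition distinguishers u v :=
  [set q | [&& occupied q, q != u, q != v & rook_adj u q != rook_adj v q]].

Lemma in_row_occ r c : (c \in row_occ r) = occupied (r, c).
Proof. by rewrite inE. Qed.

Lemma in_col_occ r c : (r \in col_occ c) = occupied (r, c).
Proof. by rewrite inE. Qed.

Lemma occupied_bubble p : occupied p -> bubble_vertex p.
Proof. by case/andP. Qed.

Lemma occupied_of_mem x : x \in H :&: VB f -> exists2 p, occupied p & f p = x.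
Proof.
rewrite inE => /andP[xH /imsetP[p]]; rewrite inE => bp xE.
by exists p; rewrite // /occupied bp -xE xH.
Qed.

Lemma card_outer_attached p : bubble_vertex p ->
  #|outer p| <= if top_row p || right_col p then 2 else 0.
Proof.
move=> bp; case: f_attached => _ /(_ p bp) /=.
have /subset_leq_card le_out : outer p \subset [set x | (x \notin VB f) && g (f p) x].
  by apply/subsetP => x; rewrite !inE => /andP[/andP[-> _] ->].
case: ifP => _ out_bound; first by case/andP: out_bound => _; apply: leq_trans.
by rewrite -(eqP out_bound).
Qed.

Lemma card_outer_le2 p : occupied p -> #|outer p| <= 2.
Proof. by move/occupied_bubble/card_outer_attached; case: ifP => // _ /leq_trans; apply. Qed.

Lemma outer_interior r c : occupied (r, c) -> r != i0 -> c != ilast -> #|outer (r, c)| = 0.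
Proof.
move=> /occupied_bubble/card_outer_attached + r0 clast.
by rewrite top_rowE right_colE (negbTE r0) (negbTE clast); case: #|_|.
Qed.

Lemma card_no_outer_nbr p : no_outer_nbr g f H p -> #|outer p| = 0.
Proof. by move/eqP; rewrite /outer => ->; rewrite cards0. Qed.

Lemma distinguishersC u v : distinguishers u v = distinguishers v u.
Proof.
apply/setP => q; rewrite !inE [rook_adj v q == _]eq_sym.
by case: (q != u); case: (q != v); rewrite ?andbF.
Qed.

Lemma nbh_diff_sub u v : occupied u -> occupied v -> u != v ->
  nbh g H (f u) :\: cnbh g H (f v) \subset f @: distinguishers u v :|: outer u.
Proof.
move=> ou ov uv; apply/subsetP => x.
rewrite !inE negb_or => /andP[/andP[xfv nx] /andP[xH gux]].
rewrite xH gux andbT /=; case: (boolP (x \in VB f)) => [/imsetP[q] | _]; last by rewrite orbT.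
rewrite inE => bq xE; subst x.
have oq : occupied q by rewrite /occupied bq xH.
have [_ irr] := g_simple; have [_ f_adj] := f_induced.
apply/orP; left; apply: imset_f; rewrite inE oq /=; apply/and3P; split.
- by apply/eqP => qu; move: gux; rewrite qu irr.
- by apply/eqP => qv; move: xfv; rewrite qv eqxx.
- rewrite -!f_adj ?occupied_bubble // gux.
  by move: nx; rewrite xH /= => /negbTE ->.
Qed.

Lemma not_twins_bound u v : occupied u -> occupied v -> u != v ->
  d < #|distinguishers u v| + #|outer u| + #|outer v|.
Proof.
move=> ou ov uv; have [_ /(_ (f u) (f v))] := H_diverse.
have fuv : f u != f v.
  have [f_inj _] := f_induced.
  exact: contra_neq (f_inj u v (occupied_bubble ou) (occupied_bubble ov)) uv.
rewrite /twins (andP ou).2 (andP ov).2 fuv /= -ltnNge => /leq_trans; apply.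
have vu : v != u by rewrite eq_sym.
have := setUSS (nbh_diff_sub ou ov uv) (nbh_diff_sub ov ou vu).
rewrite distinguishersC setUACA setUid => /subset_leq_card /leq_trans; apply.
rewrite -addnA; apply: (leq_trans (leq_card_setU _ _)).
by rewrite leq_add ?leq_imset_card ?leq_card_setU.
Qed.

Definition row_rest u := [set (u.1, c) | c in row_occ u.1 :\ u.2].
Definition col_rest u := [set (r, u.2) | r in col_occ u.2 :\ u.1].

Lemma card_row_rest u : occupied u -> #|row_rest u| < #|row_occ u.1|.
Proof.
case: u => r c ou; rewrite (cardsD1 c) inE ou add1n ltnS.
exact: leq_imset_card.
Qed.

Lemma card_col_rest u : occupied u -> #|col_rest u| < #|col_occ u.2|.
Proof.
case: u => r c ou; rewrite (cardsD1 r) inE ou add1n ltnS.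
exact: leq_imset_card.
Qed.

Lemma mem_row_rest u q : occupied q -> q.1 = u.1 -> q != u -> q \in row_rest u.
Proof.
case: u q => r c [r' c'] /= oq e qu; subst r'; apply/imsetP; exists c' => //.
by rewrite !inE oq andbT; apply: contraNneq qu => ->.
Qed.

Lemma mem_col_rest u q : occupied q -> q.2 = u.2 -> q != u -> q \in col_rest u.
Proof.
case: u q => r c [r' c'] /= oq e qu; subst c'; apply/imsetP; exists r' => //.
by rewrite !inE oq andbT; apply: contraNneq qu => ->.
Qed.

Lemma mem_line_rest u q : occupied q -> q != u -> rook_adj u q ->
  q \in row_rest u :|: col_rest u.
Proof.
move=> oq qu /andP[_ /orP[/eqP e | /eqP e]]; rewrite inE.
  by rewrite mem_row_rest.
by rewrite orbC mem_col_rest.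
Qed.

Lemma rook_adjE u q : q != u -> rook_adj u q = (u.1 == q.1) || (u.2 == q.2).
Proof. by rewrite /rook_adj eq_sym => ->. Qed.

Lemma distinguishers_sub u v : distinguishers u v \subset
  (row_rest u :|: col_rest u) :|: (row_rest v :|: col_rest v).
Proof.
apply/subsetP => q; rewrite inE => /and4P[oq qu qv]; rewrite inE.
case: (boolP (rook_adj u q)) => [adj_u _ | _ /negPn adj_v]; first by rewrite mem_line_rest.
by rewrite orbC mem_line_rest.
Qed.

Lemma distinguishers_sub_row u v : u.1 = v.1 ->
  distinguishers u v \subset col_rest u :|: col_rest v.
Proof.
move=> uv1; apply/subsetP => q; rewrite inE => /and4P[oq qu qv]; rewrite inE.
rewrite !rook_adjE // -uv1; case: (u.1 == q.1) => //=.
case: (u.2 =P q.2) => [/esym e _ | _ /negPn/eqP/esym e]; first by rewrite mem_col_rest.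
by rewrite orbC mem_col_rest.
Qed.

Lemma distinguishers_sub_col u v : u.2 = v.2 ->
  distinguishers u v \subset row_rest u :|: row_rest v.
Proof.
move=> uv2; apply/subsetP => q; rewrite inE => /and4P[oq qu qv]; rewrite inE.
rewrite !rook_adjE // -uv2; case: (u.2 == q.2); rewrite ?orbT ?orbF //.
case: (u.1 =P q.1) => [/esym e _ | _ /negPn/eqP/esym e]; first by rewrite mem_row_rest.
by rewrite orbC mem_row_rest.
Qed.

Lemma row_pair_bound u v : occupied u -> occupied v -> u.1 = v.1 -> u != v ->
  d + 3 <= #|col_occ u.2| + #|col_occ v.2| + #|outer u| + #|outer v|.
Proof.
move=> ou ov uv1 uv; have := not_twins_bound ou ov uv.
have := subset_leq_card (distinguishers_sub_row uv1).
have := (leq_card_setU (col_rest u) (col_rest v)).1.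
have := card_col_rest ou; have := card_col_rest ov; lia.
Qed.

Lemma col_pair_bound u v : occupied u -> occupied v -> u.2 = v.2 -> u != v ->
  d + 3 <= #|row_occ u.1| + #|row_occ v.1| + #|outer u| + #|outer v|.
Proof.
move=> ou ov uv2 uv; have := not_twins_bound ou ov uv.
have := subset_leq_card (distinguishers_sub_col uv2).
have := (leq_card_setU (row_rest u) (row_rest v)).1.
have := card_row_rest ou; have := card_row_rest ov; lia.
Qed.

Lemma pair_bound u v : occupied u -> occupied v -> u != v ->
  d + 5 <= #|row_occ u.1| + #|col_occ u.2| + #|row_occ v.1| + #|col_occ v.2|
           + #|outer u| + #|outer v|.
Proof.
move=> ou ov uv; have := not_twins_bound ou ov uv.
have := subset_leq_card (distinguishers_sub u v).
have := (leq_card_setU (row_rest u :|: col_rest u) (row_rest v :|: col_rest v)).1.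
have := (leq_card_setU (row_rest u) (col_rest u)).1.
have := (leq_card_setU (row_rest v) (col_rest v)).1.
have := card_row_rest ou; have := card_row_rest ov.
have := card_col_rest ou; have := card_col_rest ov; lia.
Qed.

Hypotheses (d_ge8 : 8 <= d) (d_even : ~~ odd d).

Lemma bubble_dims : d = k + k /\ n = k + 2 /\ 4 <= k.
Proof.
have d_half : d = k + k.
  by have := odd_double_half d; rewrite (negbTE d_even) add0n -addnn => ->.
by split=> //; split=> //; lia.
Qed.

Lemma first_lt_half : i0 < k.
Proof. by have := bubble_dims; rewrite /=; lia. Qed.

Lemma top_unoccupied c : k <= c -> ~~ occupied (i0, c).
Proof. by move=> kc; rewrite /occupied bubble_vertexE eqxx ltnNge kc. Qed.

Lemma card_col_occ_right c : k <= c -> #|col_occ c| < n.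
Proof.
move=> kc; rewrite -[X in _ < X](card_ord n); apply: (card_lt_notin (a := i0)).
by rewrite in_col_occ top_unoccupied.
Qed.

Lemma card_top_row_occ : #|row_occ i0|.+2 <= n.
Proof.
rewrite -[X in _ <= X](card_ord n); apply: card_notin2 (penult_neq_last d) _ _.
  by rewrite in_row_occ top_unoccupied ?penult_idxE.
by rewrite in_row_occ top_unoccupied //= /bw; lia.
Qed.

Lemma card_row_occ_le r : #|row_occ r| <= n. Proof. exact: card_ord_set_le. Qed.
Lemma card_col_occ_le c : #|col_occ c| <= n. Proof. exact: card_ord_set_le. Qed.

Lemma occupied_full_col r c : n <= #|col_occ c| -> occupied (r, c).
Proof. by move/(mem_ord_set_full r); rewrite in_col_occ. Qed.

Definition full_lower_row := exists2 r, r != i0 & forall c, occupied (r, c).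

Lemma full_lower_row_of_card r : r != i0 -> n <= #|row_occ r| -> full_lower_row.
Proof. by move=> r0 full; exists r => // c; rewrite -in_row_occ mem_ord_set_full. Qed.

Lemma full_row_of_col_pair r1 r2 c : r1 != r2 -> r1 != i0 -> r2 != i0 -> c != ilast ->
  occupied (r1, c) -> occupied (r2, c) -> full_lower_row.
Proof.
move=> r12 r10 r20 clast o1 o2.
have [full1 | full2] : n <= #|row_occ r1| \/ n <= #|row_occ r2|.
  have neq : (r1, c) != (r2, c) by rewrite xpair_eqE eqxx andbT.
  have := col_pair_bound o1 o2 erefl neq; rewrite !outer_interior //=.
  have := card_row_occ_le r1; have := card_row_occ_le r2.
  have := bubble_dims; lia.
- exact: full_lower_row_of_card r10 full1.
- exact: full_lower_row_of_card r20 full2.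
Qed.

Lemma full_row_of_big_col_nonlast c : c != ilast -> 2 < #|col_occ c| -> full_lower_row.
Proof.
move=> clast /(ord_set_pick2 i0)[r1 [r2 [+ + r10 r20 r12]]].
rewrite !in_col_occ => o1 o2.
exact: full_row_of_col_pair r12 r10 r20 clast o1 o2.
Qed.

Lemma full_row_of_big_row r : 2 < #|row_occ r| -> full_lower_row.
Proof.
move=> /(ord_set_pick2 ilast)[c1 [c2 [+ + c1last c2last c12]]].
rewrite !in_row_occ => o1 o2.
have [big1 | big2] : 2 < #|col_occ c1| \/ 2 < #|col_occ c2|.
  have neq : (r, c1) != (r, c2) by rewrite xpair_eqE eqxx.
  have := row_pair_bound o1 o2 erefl neq => /=.
  have := card_outer_le2 o1; have := card_outer_le2 o2; have := bubble_dims; lia.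
- exact: full_row_of_big_col_nonlast c1last big1.
- exact: full_row_of_big_col_nonlast c2last big2.
Qed.

Lemma full_row_of_big_col c : 2 < #|col_occ c| -> full_lower_row.
Proof.
move=> /(ord_set_pick2 i0)[r1 [r2 [+ + _ _ r12]]]; rewrite !in_col_occ => o1 o2.
have [big1 | big2] : 2 < #|row_occ r1| \/ 2 < #|row_occ r2|.
  have neq : (r1, c) != (r2, c) by rewrite xpair_eqE eqxx andbT.
  have := col_pair_bound o1 o2 erefl neq => /=.
  have := card_outer_le2 o1; have := card_outer_le2 o2; have := bubble_dims; lia.
- exact: full_row_of_big_row big1.
- exact: full_row_of_big_row big2.
Qed.

Lemma full_row_of_two_cells u v : occupied u -> occupied v -> u != v -> full_lower_row.
Proof.
move=> ou ov uv; have := pair_bound ou ov uv.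
have := card_outer_le2 ou; have := card_outer_le2 ov; have := bubble_dims.
case: (ltnP 2 #|row_occ u.1|) => [/full_row_of_big_row // | ?].
case: (ltnP 2 #|col_occ u.2|) => [/full_row_of_big_col // | ?].
case: (ltnP 2 #|row_occ v.1|) => [/full_row_of_big_row // | ?].
case: (ltnP 2 #|col_occ v.2|) => [/full_row_of_big_col // | ?].
lia.
Qed.

Section FullLowerRow.
Hypothesis full : full_lower_row.

Lemma left_penult_col_bound c : c < k -> d + 3 <= #|col_occ c| + #|col_occ ipen|.
Proof.
case: full => rs rs0 rs_full ck.
have neq : (rs, c) != (rs, ipen).
  by rewrite xpair_eqE eqxx /=; apply: contraTneq ck => ->; rewrite /= /bw; lia.
have := row_pair_bound (rs_full c) (rs_full ipen) erefl neq.
rewrite (outer_interior (rs_full c) rs0 (lt_half_neq_last ck)).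
by rewrite (outer_interior (rs_full ipen) rs0 (penult_neq_last d)) !addn0.
Qed.

Lemma left_col_occupied r c : c < k -> occupied (r, c).
Proof.
move=> ck; apply: occupied_full_col.
have := left_penult_col_bound ck; have := card_col_occ_le c.
have := @card_col_occ_right ipen; rewrite penult_idxE => /(_ (leqnn _)).
by have := bubble_dims; lia.
Qed.

Lemma penult_col_occupied r : r != i0 -> occupied (r, ipen).
Proof.
move=> r0; apply/negPn/negP; rewrite -in_col_occ => r_out.
have i0_out : i0 \notin col_occ ipen by rewrite in_col_occ top_unoccupied ?penult_idxE.
have i0r : i0 != r by rewrite eq_sym.
have := card_notin2 i0r i0_out r_out; rewrite card_ord.
have := left_penult_col_bound first_lt_half; have := card_col_occ_le i0.
by have := bubble_dims; lia.
Qed.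

Lemma top_row_outer_nbr p : top_row p -> ~~ no_outer_nbr g f H p.
Proof.
case: full => rs rs0 rs_full; case: p => r c; rewrite top_rowE => /andP[/eqP -> ck].
apply/negP => no_out.
have neq : (i0, c) != (rs, c) by rewrite xpair_eqE eqxx andbT eq_sym.
have := col_pair_bound (left_col_occupied i0 ck) (rs_full c) erefl neq => /=.
rewrite card_no_outer_nbr // (outer_interior (rs_full c) rs0 (lt_half_neq_last ck)).
by have := card_top_row_occ; have := card_row_occ_le rs; have := bubble_dims => /=; lia.
Qed.

Lemma right_col_unoccupied p : right_col p -> no_outer_nbr g f H p -> ~~ occupied p.
Proof.
case: p => r c; rewrite right_colE => /andP[r0 /eqP ->] no_out; apply/negP => o_last.
have o_pen := penult_col_occupied r0.
have neq : (r, ilast) != (r, ipen) by rewrite xpair_eqE eqxx eq_sym penult_neq_last.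
have := row_pair_bound o_last o_pen erefl neq => /=.
rewrite card_no_outer_nbr // (outer_interior o_pen r0 (penult_neq_last d)).
have := card_col_occ_right (half_le_last d).
have := @card_col_occ_right ipen; rewrite penult_idxE => /(_ (leqnn _)).
by have := bubble_dims => /=; lia.
Qed.

Lemma card_row_occ_right_col p : right_col p -> no_outer_nbr g f H p -> #|row_occ p.1| < n.
Proof.
move=> rp np; rewrite -[X in _ < X](card_ord n); apply: (card_lt_notin (a := p.2)).
by rewrite in_row_occ -surjective_pairing right_col_unoccupied.
Qed.

Lemma right_col_outer_nbr p q : p != q -> right_col p -> right_col q ->
  no_outer_nbr g f H p -> no_outer_nbr g f H q -> False.
Proof.
move=> pq rp rq np nq.
have := card_row_occ_right_col rp np; have := card_row_occ_right_col rq nq.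
case: p q pq rp rq {np nq} => [a1 c1] [a2 c2] pq; rewrite !right_colE /=.
move=> /andP[a10 /eqP c1l] /andP[a20 /eqP c2l].
have a12 : a1 != a2 by apply: contraNneq pq => ->; rewrite c1l c2l.
have i0_ne_last := lt_half_neq_last first_lt_half.
have o1 := left_col_occupied a1 first_lt_half; have o2 := left_col_occupied a2 first_lt_half.
have neq : (a1, i0) != (a2, i0) by rewrite xpair_eqE eqxx andbT.
have := col_pair_bound o1 o2 erefl neq => /=.
rewrite (outer_interior o1 a10 i0_ne_last) (outer_interior o2 a20 i0_ne_last).
by have := bubble_dims; lia.
Qed.

End FullLowerRow.

End Bubble.

Theorem lemma5p3 (T : finType) (g : rel T) (d : nat)
  (f : 'I_(bw d) * 'I_(bw d) -> T) (S H : {set T}) :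
  simple_graph g -> 8 <= d -> ~~ odd d ->
  is_induced_bubble g f ->
  properly_attached g f S ->
  diverse_plus1 g d H ->
  ((exists p, top_row p /\ no_outer_nbr g f H p) \/
   (exists p q, p != q /\ right_col p /\ right_col q /\
                no_outer_nbr g f H p /\ no_outer_nbr g f H q)) ->
  #|H :&: VB f| <= 1.
Proof.
move=> simple d_ge8 d_even induced attached diverse isolated.
rewrite leqNgt; apply/negP => /card_gt1P[x [y [xHB yHB xy]]].
have [u ou fu] := occupied_of_mem xHB; have [v ov fv] := occupied_of_mem yHB.
have uv : u != v by apply: contraNneq xy => eq_uv; rewrite -fu -fv eq_uv.
have full := full_row_of_two_cells simple induced attached diverse d_ge8 d_even ou ov uv.
case: isolated => [[p [top_p no_p]] | [p [q [pq [right_p [right_q [no_p no_q]]]]]]].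
- have := top_row_outer_nbr simple induced attached diverse d_ge8 d_even full top_p.
  by rewrite no_p.
- exact: right_col_outer_nbr simple induced attached diverse d_ge8 d_even full
    p q pq right_p right_q no_p no_q.
Qed.
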